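(* Let $p\in[1,\infty]$, $\alpha\in[0,1]$ irrational with rational approximants $\alpha_m$, $\theta\in[0,1)$, $\lambda\in\mathbb{R}$ and $E\in\mathbb{R}$. Set $A_m:=H_{\lambda,\alpha_m,0}-E$ and $A:=H_{\lambda,\alpha,\theta}-E$. Then $\nu(A)=\lim_{m\to\infty}\nu(A_m)$.
   Context: $(H_{\lambda,\beta,\theta}x)_n=x_{n+1}+x_{n-1}+\lambda v_{\beta,\theta}(n)x_n$ on $\ell^p(\mathbb{Z})$ with $v_{\beta,\theta}(n)=\chi_{[1-\beta,1)}(n\beta+\theta\bmod 1)$, for any $\beta\in[0,1]$ (rational or irrational). Rational approximants: for $\alpha=[a_1,a_2,\dots]$, $p_{-1}=1,p_0=0,p_n=a_np_{n-1}+p_{n-2}$, $q_{-1}=0,q_0=1,q_n=a_nq_{n-1}+q_{n-2}$, $\alpha_m=p_m/q_m$. Lower norm: $\nu(A)=\inf\{\|Ax\|:\|x\|=1\}$. *)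

From Stdlib Require Import Reals ZArith.
From Coquelicot Require Import Coquelicot.
Open Scope R_scope.

(** Real power with the convention pw 0 a = 0 (Rpower 0 a would be 1). *)
Definition pw (s a : R) : R := if Rle_dec s 0 then 0 else Rpower s a.

Definition lp_partial (r : R) (x : Z -> C) (N : nat) : R :=
  sum_f_R0 (fun k => pw (Cmod (x (Z.of_nat k - Z.of_nat N)%Z)) r) (2 * N).

Definition lp_norm (p : Rbar) (x : Z -> C) : Rbar :=
  match p with
  | Finite r =>
      match Lub_Rbar (fun s => exists N : nat, s = lp_partial r x N) with
      | Finite s => Finite (pw s (/ r))
      | t => t
      end
  | _ => Lub_Rbar (fun s => exists n : Z, s = Cmod (x n))
  end.

Definition lower_norm (p : Rbar) (A : (Z -> C) -> (Z -> C)) : Rbar :=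
  Glb_Rbar (fun t => exists x : Z -> C,
              lp_norm p x = Finite 1 /\ lp_norm p (A x) = Finite t).

Definition sturm_pot (beta theta : R) (n : Z) : R :=
  let y := frac_part (IZR n * beta + theta) in
  if Rle_dec (1 - beta) y then (if Rlt_dec y 1 then 1 else 0) else 0.

Definition H_op (lambda beta theta : R) (x : Z -> C) : Z -> C :=
  fun n => Cplus (Cplus (x (n + 1)%Z) (x (n - 1)%Z))
                 (Cmult (RtoC (lambda * sturm_pot beta theta n)) (x n)).

Definition H_minus_E (lambda beta theta E : R) (x : Z -> C) : Z -> C :=
  fun n => Cminus (H_op lambda beta theta x n) (Cmult (RtoC E) (x n)).

(** Continued fraction expansion alpha = [a_1, a_2, ...] via the Gauss map:
    t_0 = alpha, t_n = frac(1/t_{n-1}), a_{n} = floor(1/t_{n-1}). *)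
Definition gauss (t : R) : R := frac_part (/ t).
Definition cf_digit (alpha : R) (n : nat) : R :=
  (* a_{n+1} *) IZR (Int_part (/ (Nat.iter n gauss alpha))).

(** cf_pq alpha n = ((p_{n-1}, q_{n-1}), (p_n, q_n)). *)
Fixpoint cf_pq (alpha : R) (n : nat) : (R * R) * (R * R) :=
  match n with
  | O => ((1, 0), (0, 1))
  | S m =>
      let '((pm1, qm1), (pm, qm)) := cf_pq alpha m in
      let a := cf_digit alpha m in
      ((pm, qm), (a * pm + pm1, a * qm + qm1))
  end.

Definition cf_approx (alpha : R) (m : nat) : R :=
  let '(_, (pm, qm)) := cf_pq alpha m in pm / qm.

Definition irrational (x : R) : Prop :=
  ~ exists a b : Z, b <> 0%Z /\ x = IZR a / IZR b.

(* The lower norm is an infimum over unit vectors and H - E is a local operator. Every almost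
   minimizing unit vector can be replaced by one supported in a window whose length L depends
   only on the tolerance: for p < oo by averaging the cut-offs of x to all translates of a
   window (only their O(1) edge terms escape the control by x and Hx), for p = oo by a tent
   cut-off at an almost maximal entry. The operator sees the potential of such a vector only on
   that window, so the lower norms for two potentials are close as soon as every window of
   length L of each potential occurs in the other. For the Sturmian potential of slope alpha
   and that of its convergent p_m / q_m this holds for large m, since
   |alpha - p_m / q_m| < 1 / (q_m q_{m+1}), the points k alpha mod 1 are dense, and the points
   k p_m / q_m mod 1 fill the grid (1 / q_m) Z. *)

From Stdlib Require Import Reals ZArith Lra Lia List Classical FunctionalExtensionality.
From Coquelicot Require Import Coquelicot.
Open Scope R_scope.

(** * Finite sums over integer ranges *)

Fixpoint zrange (a : Z) (k : nat) : list Z :=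
  match k with O => nil | S k' => a :: zrange (a + 1) k' end.

Definition zsum (l : list Z) (f : Z -> R) : R := fold_right (fun n s => f n + s) 0 l.
Arguments zsum : simpl never.

Lemma zsum_nil f : zsum nil f = 0.
Proof. reflexivity. Qed.

Lemma zsum_cons a l f : zsum (a :: l) f = f a + zsum l f.
Proof. reflexivity. Qed.

Lemma zsum_app l1 l2 f : zsum (l1 ++ l2) f = zsum l1 f + zsum l2 f.
Proof.
  induction l1 as [|a l1 IH]; cbn [app]; rewrite ?zsum_cons, ?zsum_nil, ?IH; lra.
Qed.

Lemma zsum_ext l f g : (forall n, In n l -> f n = g n) -> zsum l f = zsum l g.
Proof.
  induction l as [|a l IH]; intros H; [reflexivity|].
  rewrite !zsum_cons, H, IH; [reflexivity| |left]; auto.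
  intros; apply H; right; auto.
Qed.

Lemma zsum_le l f g : (forall n, In n l -> f n <= g n) -> zsum l f <= zsum l g.
Proof.
  induction l as [|a l IH]; intros H; rewrite ?zsum_nil, ?zsum_cons; [lra|].
  apply Rplus_le_compat; [apply H; left | apply IH; intros; apply H; right]; auto.
Qed.

Lemma zsum_lt l f g : (forall n, In n l -> f n <= g n) -> (exists n, In n l /\ f n < g n) ->
  zsum l f < zsum l g.
Proof.
  induction l as [|a l IH]; intros Hle [j [Hj Hlt]]; [destruct Hj|].
  rewrite !zsum_cons. destruct Hj as [<-|Hj].
  - pose proof (zsum_le l f g (fun n Hn => Hle n (or_intror Hn))); lra.
  - pose proof (Hle a (or_introl eq_refl)).
    assert (zsum l f < zsum l g) by (apply IH; [intros; apply Hle; right|exists j]; auto).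
    lra.
Qed.

Lemma zsum_0 l f : (forall n, In n l -> f n = 0) -> zsum l f = 0.
Proof.
  induction l as [|a l IH]; intros H; [reflexivity|].
  rewrite zsum_cons, H, IH; [lra| |left]; auto.
  intros; apply H; right; auto.
Qed.

Lemma zsum_ge_0 l f : (forall n, In n l -> 0 <= f n) -> 0 <= zsum l f.
Proof. intros H. rewrite <- (zsum_0 l (fun _ => 0)) by auto. apply zsum_le, H. Qed.

Lemma zsum_plus l f g : zsum l (fun n => f n + g n) = zsum l f + zsum l g.
Proof. induction l as [|a l IH]; rewrite ?zsum_nil, ?zsum_cons, ?IH; lra. Qed.

Lemma zsum_scal l c f : zsum l (fun n => c * f n) = c * zsum l f.
Proof. induction l as [|a l IH]; rewrite ?zsum_nil, ?zsum_cons, ?IH; lra. Qed.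

Lemma zsum_swap l1 l2 (f : Z -> Z -> R) :
  zsum l1 (fun j => zsum l2 (f j)) = zsum l2 (fun i => zsum l1 (fun j => f j i)).
Proof.
  induction l1 as [|a l1 IH].
  - rewrite zsum_nil, zsum_0; auto.
  - rewrite zsum_cons, IH, <- zsum_plus. apply zsum_ext. intros n _. rewrite zsum_cons. reflexivity.
Qed.

Lemma in_zrange a k n : In n (zrange a k) <-> (a <= n < a + Z.of_nat k)%Z.
Proof. revert a; induction k; intros a; simpl; [|rewrite IHk]; lia. Qed.

Lemma zrange_add a k1 k2 : zrange a (k1 + k2) = zrange a k1 ++ zrange (a + Z.of_nat k1) k2.
Proof.
  revert a; induction k1; intros a; simpl.
  - f_equal; lia.
  - rewrite IHk1. do 3 f_equal. lia.
Qed.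

Lemma zsum_const a k c : zsum (zrange a k) (fun _ => c) = INR k * c.
Proof.
  revert a; induction k; intros a; simpl; rewrite ?zsum_nil, ?zsum_cons, ?IHk; [lra|].
  destruct k; simpl INR; lra.
Qed.

Lemma zsum_shift a k s f : zsum (zrange a k) (fun n => f (n + s)%Z) = zsum (zrange (a + s) k) f.
Proof.
  revert a; induction k; intros a; simpl; auto.
  rewrite !zsum_cons, IHk. do 3 f_equal. lia.
Qed.

Lemma zrange_split3 b m a k : (b <= a)%Z -> (a + Z.of_nat k <= b + Z.of_nat m)%Z ->
  zrange b m = zrange b (Z.to_nat (a - b)) ++ zrange a k
               ++ zrange (a + Z.of_nat k) (m - Z.to_nat (a - b) - k).
Proof.
  intros H1 H2.
  replace m with (Z.to_nat (a - b) + (k + (m - Z.to_nat (a - b) - k)))%nat at 1 by lia.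
  rewrite !zrange_add. repeat f_equal; lia.
Qed.

Lemma zsum_subrange F a k b m : (forall n, 0 <= F n) -> (b <= a)%Z ->
  (a + Z.of_nat k <= b + Z.of_nat m)%Z -> zsum (zrange a k) F <= zsum (zrange b m) F.
Proof.
  intros HF H1 H2. rewrite (zrange_split3 b m a k H1 H2), !zsum_app.
  pose proof (zsum_ge_0 (zrange b (Z.to_nat (a - b))) F (fun n _ => HF n)).
  pose proof (zsum_ge_0 (zrange (a + Z.of_nat k) (m - Z.to_nat (a - b) - k)) F (fun n _ => HF n)).
  lra.
Qed.

Lemma zsum_supp F a k b m : (forall n, ~ (a <= n < a + Z.of_nat k)%Z -> F n = 0) ->
  (b <= a)%Z -> (a + Z.of_nat k <= b + Z.of_nat m)%Z ->
  zsum (zrange b m) F = zsum (zrange a k) F.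
Proof.
  intros HF H1 H2. rewrite (zrange_split3 b m a k H1 H2), !zsum_app.
  rewrite (zsum_0 (zrange b _) F), (zsum_0 (zrange (a + _) _) F).
  - lra.
  - intros n Hn%in_zrange. apply HF. lia.
  - intros n Hn%in_zrange. apply HF. lia.
Qed.

Lemma zsum_le_supp F a k b m : (forall n, 0 <= F n) ->
  (forall n, ~ (a <= n < a + Z.of_nat k)%Z -> F n = 0) ->
  zsum (zrange b m) F <= zsum (zrange a k) F.
Proof.
  intros H0 HF. set (c := Z.min a b).
  set (M := Z.to_nat (Z.max (a + Z.of_nat k) (b + Z.of_nat m) - c)).
  rewrite <- (zsum_supp F a k c M HF) by lia.
  apply zsum_subrange; auto; lia.
Qed.

Lemma sum_f_R0_zsum g a n :
  sum_f_R0 (fun k => g (a + Z.of_nat k)%Z) n = zsum (zrange a (S n)) g.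
Proof.
  induction n; cbn [sum_f_R0].
  - cbn [zrange]. rewrite zsum_cons, zsum_nil, Z.add_0_r. lra.
  - rewrite IHn, <- (Nat.add_1_r (S n)), zrange_add, zsum_app.
    change (zrange _ 1) with ((a + Z.of_nat (S n))%Z :: nil). rewrite zsum_cons, zsum_nil. lra.
Qed.

Lemma zsum_windows_swap l k a F :
  zsum l (fun j => zsum (zrange (j + a) k) F)
  = zsum (zrange 0 k) (fun i => zsum l (fun j => F (j + (a + i))%Z)).
Proof.
  rewrite <- zsum_swap. apply zsum_ext. intros j _.
  rewrite <- (Z.add_0_l (j + a)), <- zsum_shift. apply zsum_ext. intros i _. f_equal. lia.
Qed.

Lemma zsum_windows_le j0 J k a F M : (forall b m, zsum (zrange b m) F <= M) ->
  zsum (zrange j0 J) (fun j => zsum (zrange (j + a) k) F) <= INR k * M.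
Proof.
  intros H. rewrite zsum_windows_swap, <- (zsum_const 0 k M). apply zsum_le. intros i _.
  rewrite zsum_shift. apply H.
Qed.

(* Each point of [a, a + k) lies in exactly L of the windows [j, j + L), j in [a - L, a + k). *)
Lemma zsum_windows_ge a k L F : (forall n, 0 <= F n) ->
  INR L * zsum (zrange a k) F
  <= zsum (zrange (a - Z.of_nat L) (k + L)) (fun j => zsum (zrange (j + 0) L) F).
Proof.
  intros HF. rewrite zsum_windows_swap, <- (zsum_const 0 L). apply zsum_le.
  intros i Hi%in_zrange. rewrite zsum_shift. apply zsum_subrange; auto; lia.
Qed.

Lemma zsum_pigeonhole l A B K : (forall j, In j l -> 0 <= A j) -> (forall j, In j l -> 0 <= B j) ->
  0 <= K -> 0 < zsum l B -> zsum l A <= K * zsum l B ->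
  exists j, In j l /\ 0 < B j /\ A j <= K * B j.
Proof.
  intros HA HB HK Hpos Hs. apply NNPP. intros Hn.
  assert (Hgt : forall j, In j l -> 0 < B j -> K * B j < A j).
  { intros j Hj Hb. apply Rnot_le_lt. intros Hle. apply Hn. eauto. }
  assert (Hle : forall j, In j l -> K * B j <= A j).
  { intros j Hj. destruct (HB j Hj) as [Hb| <-]; [apply Rlt_le, Hgt; auto|].
    rewrite Rmult_0_r. auto. }
  assert (exists j, In j l /\ 0 < B j) as [j [Hj Hb]].
  { apply NNPP. intros Hn2. rewrite (zsum_0 l B) in Hpos; [lra|].
    intros j Hj. destruct (HB j Hj); [exfalso; eauto|auto]. }
  assert (zsum l (fun j => K * B j) < zsum l A) by (apply zsum_lt; eauto).
  rewrite zsum_scal in H. lra.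
Qed.

(** * l^p norms of finitely supported vectors *)

Lemma pw_ge_0 s a : 0 <= pw s a.
Proof. unfold pw. destruct (Rle_dec s 0); [lra|]. left; apply exp_pos. Qed.

Lemma pw_pos s a : 0 < s -> pw s a = Rpower s a.
Proof. intros H. unfold pw. destruct (Rle_dec s 0); [lra|auto]. Qed.

Lemma pw_gt_0 s a : 0 < s -> 0 < pw s a.
Proof. intros H. rewrite pw_pos by auto. apply exp_pos. Qed.

Lemma pw_0_l a : pw 0 a = 0.
Proof. unfold pw. destruct (Rle_dec 0 0); lra. Qed.

Lemma pw_1_l a : pw 1 a = 1.
Proof. rewrite pw_pos by lra. unfold Rpower. rewrite ln_1, Rmult_0_r. apply exp_0. Qed.

Lemma pw_pw_inv r s : 0 < r -> 0 <= s -> pw (pw s r) (/ r) = s.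
Proof.
  intros Hr [Hs| <-]; [|rewrite !pw_0_l; auto].
  rewrite (pw_pos s), pw_pos, Rpower_mult, Rinv_r by (try apply exp_pos; lra).
  apply Rpower_1; auto.
Qed.

Lemma pw_inv_pw r s : 0 < r -> 0 <= s -> pw (pw s (/ r)) r = s.
Proof.
  intros Hr Hs. rewrite <- (Rinv_inv r) at 2. apply pw_pw_inv; auto.
  apply Rinv_0_lt_compat; auto.
Qed.

Lemma pw_le_l s1 s2 a : 0 <= a -> 0 <= s1 <= s2 -> pw s1 a <= pw s2 a.
Proof.
  intros Ha [[Hs1| <-] Hs]; [|rewrite pw_0_l; apply pw_ge_0].
  rewrite !pw_pos by lra. apply Rle_Rpower_l; lra.
Qed.

Lemma pw_mult_l s1 s2 a : 0 <= s1 -> 0 <= s2 -> pw (s1 * s2) a = pw s1 a * pw s2 a.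
Proof.
  intros [H1| <-]; [|rewrite Rmult_0_l, !pw_0_l; lra].
  intros [H2| <-]; [|rewrite Rmult_0_r, !pw_0_l; lra].
  rewrite !pw_pos by (try apply Rmult_lt_0_compat; lra). symmetry; apply Rpower_mult_distr; auto.
Qed.

Lemma pw_superadditive u v r : 1 <= r -> 0 <= u -> 0 <= v -> pw u r + pw v r <= pw (u + v) r.
Proof.
  intros Hr [Hu| <-]; [|rewrite pw_0_l, !Rplus_0_l; lra].
  intros [Hv| <-]; [|rewrite pw_0_l, !Rplus_0_r; lra].
  assert (Hsplit : forall w, 0 < w -> pw w r = w * pw w (r - 1)).
  { intros w Hw. rewrite !pw_pos by auto. rewrite <- (Rpower_1 w) at 2 by auto.
    rewrite <- Rpower_plus. f_equal. ring. }
  rewrite !Hsplit, Rmult_plus_distr_r by lra.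
  apply Rplus_le_compat; apply Rmult_le_compat_l, pw_le_l; lra.
Qed.

Lemma pw_sum3_le a b c r : 0 <= r -> 0 <= a -> 0 <= b -> 0 <= c ->
  pw (a + b + c) r <= pw 3 r * (pw a r + pw b r + pw c r).
Proof.
  intros Hr Ha Hb Hc. set (m := Rmax a (Rmax b c)).
  assert (a <= m /\ b <= m /\ c <= m) as (Ham & Hbm & Hcm).
  { unfold m. pose proof (Rmax_l b c); pose proof (Rmax_r b c).
    pose proof (Rmax_l a (Rmax b c)); pose proof (Rmax_r a (Rmax b c)). lra. }
  apply Rle_trans with (pw (3 * m) r); [apply pw_le_l; lra|].
  rewrite pw_mult_l by lra. apply Rmult_le_compat_l; [apply pw_ge_0|].
  pose proof (pw_ge_0 a r); pose proof (pw_ge_0 b r); pose proof (pw_ge_0 c r).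
  unfold m. repeat (apply Rmax_case_strong; intros); lra.
Qed.

Definition supported (x : Z -> C) (a : Z) (k : nat) : Prop :=
  forall n, ~ (a <= n < a + Z.of_nat k)%Z -> x n = RtoC 0.

Definition pmass (r : R) (x : Z -> C) (n : Z) : R := pw (Cmod (x n)) r.

Lemma pmass_ge_0 r x n : 0 <= pmass r x n.
Proof. apply pw_ge_0. Qed.

Lemma pmass_supported r x a k : supported x a k ->
  forall n, ~ (a <= n < a + Z.of_nat k)%Z -> pmass r x n = 0.
Proof. intros H n Hn. unfold pmass. rewrite H, Cmod_0 by auto. apply pw_0_l. Qed.

Lemma lp_partial_zsum r x N :
  lp_partial r x N = zsum (zrange (- Z.of_nat N) (2 * N + 1)) (pmass r x).
Proof.
  unfold lp_partial. rewrite Nat.add_1_r, <- sum_f_R0_zsum.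
  apply sum_eq. intros i _. unfold pmass. do 3 f_equal. lia.
Qed.

Lemma lp_norm_fin_supp r x a k : 0 < r -> supported x a k ->
  lp_norm (Finite r) x = Finite (pw (zsum (zrange a k) (pmass r x)) (/ r)).
Proof.
  intros Hr Hs. unfold lp_norm.
  replace (Lub_Rbar _) with (Finite (zsum (zrange a k) (pmass r x))); [reflexivity|].
  symmetry. apply is_lub_Rbar_unique. split.
  - intros s [N ->]. rewrite lp_partial_zsum.
    apply zsum_le_supp; [apply pmass_ge_0 | apply pmass_supported; auto].
  - intros b Hb. apply Hb. exists (Z.to_nat (Z.abs a) + k)%nat.
    rewrite lp_partial_zsum. symmetry.
    apply zsum_supp; [apply pmass_supported; auto | lia | lia].
Qed.

Lemma lp_norm_fin_spec r x t : 0 < r -> lp_norm (Finite r) x = Finite t ->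
  0 <= t /\ (forall a k, zsum (zrange a k) (pmass r x) <= pw t r) /\
  (forall d, 0 < d ->
     exists N : nat, pw t r - d < zsum (zrange (- Z.of_nat N) (2 * N + 1)) (pmass r x)).
Proof.
  intros Hr. unfold lp_norm.
  destruct (Lub_Rbar_correct (fun s => exists N : nat, s = lp_partial r x N)) as [Hub Hlub].
  destruct (Lub_Rbar _) as [s| |]; try discriminate.
  intros Ht. injection Ht as <-.
  assert (Hs0 : 0 <= s).
  { apply Rle_trans with (lp_partial r x 0); [|apply (Hub _ (ex_intro _ 0%nat eq_refl))].
    rewrite lp_partial_zsum. apply zsum_ge_0. intros; apply pmass_ge_0. }
  rewrite pw_inv_pw by auto. split; [apply pw_ge_0|split].
  - intros a k. apply Rle_trans with (lp_partial r x (Z.to_nat (Z.abs a) + k)).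
    + rewrite lp_partial_zsum. apply zsum_subrange; [apply pmass_ge_0 | lia | lia].
    + apply (Hub _ (ex_intro _ _ eq_refl)).
  - intros d Hd. apply NNPP. intros Hn.
    enough (Rbar_le s (s - d)) by (simpl in *; lra).
    apply Hlub. intros y [N ->]. simpl. rewrite lp_partial_zsum.
    apply Rnot_lt_le. intros Hlt. apply Hn. eauto.
Qed.

Lemma lp_norm_inf_spec x t : lp_norm p_infty x = Finite t ->
  (forall n, Cmod (x n) <= t) /\ (forall d, 0 < d -> exists n, t - d < Cmod (x n)).
Proof.
  unfold lp_norm. intros Ht.
  destruct (Lub_Rbar_correct (fun s => exists n : Z, s = Cmod (x n))) as [Hub Hlub].
  rewrite Ht in Hub, Hlub. split.
  - intros n. exact (Hub _ (ex_intro _ n eq_refl)).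
  - intros d Hd. apply NNPP. intros Hn.
    enough (Rbar_le t (t - d)) by (simpl in *; lra).
    apply Hlub. intros y [n ->]. simpl. apply Rnot_lt_le. intros Hlt. apply Hn. eauto.
Qed.

Lemma lp_norm_inf_intro x t : (forall n, Cmod (x n) <= t) ->
  (forall d, 0 < d -> exists n, t - d < Cmod (x n)) -> lp_norm p_infty x = Finite t.
Proof.
  intros H1 H2. apply is_lub_Rbar_unique. split.
  - intros y [n ->]. apply H1.
  - intros [b| |] Hb; simpl; auto.
    + apply Rnot_lt_le. intros Hlt. destruct (H2 (t - b)) as [n Hn]; [lra|].
      specialize (Hb _ (ex_intro _ n eq_refl)). simpl in Hb. lra.
    + exact (Hb _ (ex_intro _ 0%Z eq_refl)).
Qed.

Lemma lp_norm_inf_bounded x M : (forall n, Cmod (x n) <= M) ->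
  exists t, lp_norm p_infty x = Finite t /\ t <= M.
Proof.
  intros H. unfold lp_norm.
  destruct (Lub_Rbar_correct (fun s => exists n : Z, s = Cmod (x n))) as [Hub Hlub].
  assert (HM : Rbar_le (Lub_Rbar (fun s => exists n : Z, s = Cmod (x n))) M).
  { apply Hlub. intros y [n ->]. apply H. }
  specialize (Hub _ (ex_intro _ 0%Z eq_refl)).
  destruct (Lub_Rbar _) as [s| |]; simpl in *; [eauto|contradiction..].
Qed.

Lemma lp_norm_ge_0 p x t : lp_norm p x = Finite t -> 0 <= t.
Proof.
  destruct p as [r| |].
  - unfold lp_norm. destruct (Lub_Rbar _); try discriminate.
    intros H; injection H as <-. apply pw_ge_0.
  - intros H. destruct (lp_norm_inf_spec x t H) as [H1 _].
    apply Rle_trans with (Cmod (x 0%Z)); [apply Cmod_ge_0 | apply H1].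
  - intros H. destruct (lp_norm_inf_spec x t H) as [H1 _].
    apply Rle_trans with (Cmod (x 0%Z)); [apply Cmod_ge_0 | apply H1].
Qed.

Lemma lp_norm_ext p x y : (forall n, x n = y n) -> lp_norm p x = lp_norm p y.
Proof. intros H. apply functional_extensionality in H. subst; auto. Qed.

Lemma supported_shift x a k s : supported x a k -> supported (fun n => x (n + s)%Z) (a - s) k.
Proof. intros H n Hn. apply H. lia. Qed.

Lemma lp_norm_shift p x a k s : Rbar_le (Finite 1) p -> supported x a k ->
  lp_norm p (fun n => x (n + s)%Z) = lp_norm p x.
Proof.
  intros Hp Hs. destruct p as [r| |]; simpl in Hp; try contradiction.
  - rewrite (lp_norm_fin_supp r _ (a - s) k), (lp_norm_fin_supp r x a k)
      by (lra || auto using supported_shift).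
    unfold pmass. rewrite (zsum_shift (a - s) k s (fun n => pw (Cmod (x n)) r)).
    do 4 f_equal. lia.
  - apply Lub_Rbar_eqset. intros v; split; intros [n ->]; eauto.
    exists (n - s)%Z. do 2 f_equal. lia.
Qed.

Lemma lp_norm_scal_supp r x a k c : 0 < r -> 0 < c -> supported x a k ->
  lp_norm (Finite r) (fun n => Cmult (RtoC c) (x n))
  = Finite (c * pw (zsum (zrange a k) (pmass r x)) (/ r)).
Proof.
  intros Hr Hc Hs. rewrite (lp_norm_fin_supp r _ a k); auto.
  - f_equal. unfold pmass.
    rewrite (zsum_ext _ _ (fun n => pw c r * pw (Cmod (x n)) r)).
    + rewrite zsum_scal, pw_mult_l, pw_pw_inv; auto using pw_ge_0; try lra.
      apply zsum_ge_0. intros; apply pw_ge_0.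
    + intros n _. rewrite Cmod_mult, Cmod_R, Rabs_pos_eq by lra.
      apply pw_mult_l; [lra | apply Cmod_ge_0].
  - intros n Hn. rewrite Hs by auto. apply Cmult_0_r.
Qed.

Lemma lp_norm_scal_inf x c t : 0 < c -> lp_norm p_infty x = Finite t ->
  lp_norm p_infty (fun n => Cmult (RtoC c) (x n)) = Finite (c * t).
Proof.
  intros Hc H. destruct (lp_norm_inf_spec x t H) as [H1 H2].
  apply lp_norm_inf_intro; intros; rewrite ?Cmod_mult, ?Cmod_R, ?Rabs_pos_eq by lra.
  - apply Rmult_le_compat_l; auto; lra.
  - destruct (H2 (d / c)) as [n Hn]; [apply Rdiv_lt_0_compat; auto|].
    exists n. rewrite Cmod_mult, Cmod_R, Rabs_pos_eq by lra.
    replace (c * t - d) with (c * (t - d / c)) by (field; lra).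
    apply Rmult_lt_compat_l; auto.
Qed.

Lemma Cmod_le_supported x a k : supported x a k ->
  forall n, Cmod (x n) <= zsum (zrange a k) (fun m => Cmod (x m)).
Proof.
  intros H n. destruct (classic (a <= n < a + Z.of_nat k)%Z) as [Hn|Hn].
  - rewrite (zrange_split3 a k n 1) by lia. cbn [zrange].
    rewrite !zsum_app, zsum_cons, zsum_nil.
    pose proof (zsum_ge_0 (zrange a (Z.to_nat (n - a))) _ (fun m _ => Cmod_ge_0 (x m))).
    pose proof (zsum_ge_0 (zrange (n + Z.of_nat 1) (k - Z.to_nat (n - a) - 1)) _
                  (fun m _ => Cmod_ge_0 (x m))).
    lra.
  - rewrite H, Cmod_0 by auto. apply zsum_ge_0. intros; apply Cmod_ge_0.
Qed.

Lemma lp_norm_supported_finite p x a k : Rbar_le (Finite 1) p -> supported x a k ->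
  exists t, lp_norm p x = Finite t.
Proof.
  intros Hp Hs. destruct p as [r| |]; simpl in Hp; try contradiction.
  - rewrite (lp_norm_fin_supp r x a k) by (auto; lra). eauto.
  - destruct (lp_norm_inf_bounded x _ (Cmod_le_supported x a k Hs)) as [t [Ht _]]. eauto.
Qed.

(** * Localization of almost minimizing vectors *)

Definition schr (lambda E : R) (V : Z -> R) (x : Z -> C) : Z -> C :=
  fun n => Cminus (Cplus (Cplus (x (n + 1)%Z) (x (n - 1)%Z))
                         (Cmult (RtoC (lambda * V n)) (x n)))
                  (Cmult (RtoC E) (x n)).

Lemma H_minus_E_schr lambda beta theta E :
  H_minus_E lambda beta theta E = schr lambda E (sturm_pot beta theta).
Proof. reflexivity. Qed.

Section Operator.
Variables (lambda E : R) (V : Z -> R).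

Lemma schr_cutoff x (phi : Z -> R) n :
  schr lambda E V (fun m => Cmult (RtoC (phi m)) (x m)) n =
  Cplus (Cplus (Cmult (RtoC (phi n)) (schr lambda E V x n))
               (Cmult (RtoC (phi (n + 1)%Z - phi n)) (x (n + 1)%Z)))
        (Cmult (RtoC (phi (n - 1)%Z - phi n)) (x (n - 1)%Z)).
Proof.
  unfold schr. destruct (x (n + 1)%Z), (x (n - 1)%Z), (x n).
  unfold Cminus, Cplus, Cmult, Copp, RtoC; simpl. f_equal; ring.
Qed.

Lemma schr_scal x c n :
  schr lambda E V (fun m => Cmult (RtoC c) (x m)) n = Cmult (RtoC c) (schr lambda E V x n).
Proof.
  unfold schr. destruct (x (n + 1)%Z), (x (n - 1)%Z), (x n).
  unfold Cminus, Cplus, Cmult, Copp, RtoC; simpl. f_equal; ring.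
Qed.

Lemma Cmod_schr_cutoff_le x (phi : Z -> R) n :
  Cmod (schr lambda E V (fun m => Cmult (RtoC (phi m)) (x m)) n) <=
  Rabs (phi n) * Cmod (schr lambda E V x n)
  + Rabs (phi (n + 1)%Z - phi n) * Cmod (x (n + 1)%Z)
  + Rabs (phi (n - 1)%Z - phi n) * Cmod (x (n - 1)%Z).
Proof.
  rewrite schr_cutoff. eapply Rle_trans; [apply Cmod_triangle|].
  apply Rplus_le_compat; [eapply Rle_trans; [apply Cmod_triangle|]|];
    rewrite !Cmod_mult, !Cmod_R; lra.
Qed.

Lemma supported_schr x a k : supported x a k -> supported (schr lambda E V x) (a - 1) (k + 2).
Proof.
  intros H n Hn. unfold schr. rewrite !H by lia.
  unfold Cminus, Cplus, Cmult, Copp, RtoC; simpl. f_equal; ring.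
Qed.

End Operator.

Lemma schr_shift lambda E V W y s n :
  (forall m, y (m + s)%Z = RtoC 0 \/ W m = V (m + s)%Z) ->
  schr lambda E W (fun m => y (m + s)%Z) n = schr lambda E V y (n + s)%Z.
Proof.
  intros H. unfold schr. replace (n + 1 + s)%Z with (n + s + 1)%Z by lia.
  replace (n - 1 + s)%Z with (n + s - 1)%Z by lia.
  destruct (H n) as [H0|H0]; rewrite H0; auto.
  unfold Cminus, Cplus, Cmult, Copp, RtoC; simpl. f_equal; ring.
Qed.

Definition attained_on (p : Rbar) (lambda E : R) (V : Z -> R) (c : Z) (L : nat) (t : R) :=
  exists y, supported y c L /\ lp_norm p y = Finite 1 /\
            lp_norm p (schr lambda E V y) = Finite t.

Lemma attained_on_normalize r lambda E V y a k K : 0 < r -> 0 <= K -> supported y a k ->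
  0 < zsum (zrange a k) (pmass r y) ->
  zsum (zrange (a - 1) (k + 2)) (pmass r (schr lambda E V y))
  <= K * zsum (zrange a k) (pmass r y) ->
  exists t, attained_on (Finite r) lambda E V a k t /\ t <= pw K (/ r).
Proof.
  intros Hr HK Hy Hpos Hle.
  set (s := pw (zsum (zrange a k) (pmass r y)) (/ r)).
  assert (Hs : 0 < s) by (apply pw_gt_0; auto).
  set (A := zsum (zrange (a - 1) (k + 2)) (pmass r (schr lambda E V y))).
  exists (/ s * pw A (/ r)). split.
  - exists (fun n => Cmult (RtoC (/ s)) (y n)). split; [|split].
    + intros n Hn. rewrite Hy by auto. apply Cmult_0_r.
    + rewrite (lp_norm_scal_supp r _ a k) by (auto using Rinv_0_lt_compat; lra).
      f_equal. fold s. field. lra.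
    + rewrite (lp_norm_ext _ _ (fun n => Cmult (RtoC (/ s)) (schr lambda E V y n)))
        by (intros; apply schr_scal).
      rewrite (lp_norm_scal_supp r _ (a - 1) (k + 2));
        auto using supported_schr, Rinv_0_lt_compat; lra.
  - assert (HA : pw A (/ r) <= pw K (/ r) * s).
    { unfold s. rewrite <- pw_mult_l by (try apply zsum_ge_0; intros; auto using pmass_ge_0).
      apply pw_le_l; [left; apply Rinv_0_lt_compat; lra|].
      split; [apply zsum_ge_0; intros; apply pmass_ge_0|apply Hle]. }
    apply Rmult_le_reg_l with s; auto.
    rewrite <- Rmult_assoc, Rinv_r, Rmult_1_l by lra. lra.
Qed.

Definition box (j : Z) (L : nat) (n : Z) : R :=
  if Z_lt_le_dec n j then 0 else if Z_lt_le_dec n (j + Z.of_nat L) then 1 else 0.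

Lemma box_in j L n : (j <= n < j + Z.of_nat L)%Z -> box j L n = 1.
Proof.
  intros H. unfold box.
  destruct (Z_lt_le_dec n j), (Z_lt_le_dec n (j + Z.of_nat L)); lia || auto.
Qed.

Lemma box_out j L n : ~ (j <= n < j + Z.of_nat L)%Z -> box j L n = 0.
Proof.
  intros H. unfold box.
  destruct (Z_lt_le_dec n j), (Z_lt_le_dec n (j + Z.of_nat L)); lia || auto.
Qed.

Lemma box_0_1 j L n : box j L n = 0 \/ box j L n = 1.
Proof. unfold box. destruct (Z_lt_le_dec n j), (Z_lt_le_dec n (j + Z.of_nat L)); auto. Qed.

Lemma Rabs_box_le j L n : Rabs (box j L n) <= 1.
Proof. destruct (box_0_1 j L n) as [-> | ->]; rewrite ?Rabs_R0, ?Rabs_R1; lra. Qed.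

Lemma Rabs_box_sub_le j L n m : Rabs (box j L n - box j L m) <= 1.
Proof.
  destruct (box_0_1 j L n) as [-> | ->], (box_0_1 j L m) as [-> | ->];
    apply Rabs_le; lra.
Qed.

Definition cut (x : Z -> C) (j : Z) (L : nat) : Z -> C :=
  fun n => Cmult (RtoC (box j L n)) (x n).

Lemma supported_cut x j L : supported (cut x j L) j L.
Proof. intros n Hn. unfold cut. rewrite box_out by auto. apply Cmult_0_l. Qed.

Section FiniteCutoff.
Variables (lambda E : R) (V : Z -> R) (r : R) (x : Z -> C).
Hypothesis Hr : 0 <= r.

Definition edge_mass (n : Z) : R :=
  pw 3 r * (pmass r (schr lambda E V x) n + pmass r x (n + 1)%Z + pmass r x (n - 1)%Z).

Lemma pmass_schr_cut_le_edge j L n : pmass r (schr lambda E V (cut x j L)) n <= edge_mass n.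
Proof.
  unfold pmass, edge_mass.
  pose proof (Cmod_ge_0 (schr lambda E V x n)).
  pose proof (Cmod_ge_0 (x (n + 1)%Z)); pose proof (Cmod_ge_0 (x (n - 1)%Z)).
  eapply Rle_trans; [apply pw_le_l; [lra|split; [apply Cmod_ge_0|apply Cmod_schr_cutoff_le]]|].
  eapply Rle_trans; [|apply pw_sum3_le; lra].
  apply pw_le_l; [lra|split].
  - pose proof (Rabs_pos (box j L n)).
    pose proof (Rabs_pos (box j L (n + 1)%Z - box j L n)).
    pose proof (Rabs_pos (box j L (n - 1)%Z - box j L n)).
    repeat apply Rplus_le_le_0_compat; apply Rmult_le_pos; auto.
  - pose proof (Rabs_box_le j L n).
    pose proof (Rabs_box_sub_le j L (n + 1)%Z n).
    pose proof (Rabs_box_sub_le j L (n - 1)%Z n).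
    repeat apply Rplus_le_compat; rewrite <- (Rmult_1_l (Cmod _)) at 2;
      apply Rmult_le_compat_r; auto.
Qed.

Lemma pmass_schr_cut_interior j L n : (j < n < j + Z.of_nat L - 1)%Z ->
  pmass r (schr lambda E V (cut x j L)) n <= pmass r (schr lambda E V x) n.
Proof.
  intros H. unfold pmass. apply pw_le_l; [lra|split; [apply Cmod_ge_0|]].
  eapply Rle_trans; [apply Cmod_schr_cutoff_le|].
  rewrite !box_in by lia. rewrite Rminus_diag, Rabs_R0, Rabs_R1. lra.
Qed.

Lemma zsum_pmass_cut j L : zsum (zrange j L) (pmass r (cut x j L)) = zsum (zrange j L) (pmass r x).
Proof.
  apply zsum_ext. intros n Hn%in_zrange. unfold pmass, cut.
  rewrite box_in, Cmult_1_l by lia. reflexivity.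
Qed.

Lemma zsum_pmass_schr_cut_le j L0 :
  zsum (zrange (j - 1) (L0 + 2 + 2)) (pmass r (schr lambda E V (cut x j (L0 + 2))))
  <= zsum (zrange (j + -1) 2) edge_mass
     + (zsum (zrange (j + 1) L0) (pmass r (schr lambda E V x))
        + zsum (zrange (j + (1 + Z.of_nat L0)) 2) edge_mass).
Proof.
  replace (L0 + 2 + 2)%nat with (2 + (L0 + 2))%nat by lia.
  rewrite zrange_add, zrange_add, !zsum_app.
  replace (j - 1 + Z.of_nat 2)%Z with (j + 1)%Z by lia.
  replace (j + 1 + Z.of_nat L0)%Z with (j + (1 + Z.of_nat L0))%Z by lia.
  replace (j - 1)%Z with (j + -1)%Z by lia.
  apply Rplus_le_compat; [|apply Rplus_le_compat]; apply zsum_le; intros n Hn%in_zrange;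
    auto using pmass_schr_cut_le_edge.
  apply pmass_schr_cut_interior. lia.
Qed.

Lemma zsum_edge_mass_le tau : (forall a k, zsum (zrange a k) (pmass r x) <= 1) ->
  (forall a k, zsum (zrange a k) (pmass r (schr lambda E V x)) <= tau) ->
  forall b m, zsum (zrange b m) edge_mass <= pw 3 r * (tau + 2).
Proof.
  intros Hx HBx b m. unfold edge_mass. rewrite zsum_scal.
  apply Rmult_le_compat_l; [apply pw_ge_0|]. rewrite !zsum_plus.
  pose proof (HBx b m).
  pose proof (zsum_shift b m 1 (pmass r x)).
  pose proof (zsum_shift b m (-1) (pmass r x)).
  rewrite (zsum_ext _ (fun n => pmass r x (n - 1)%Z) (fun n => pmass r x (n + -1)%Z))
    by (intros; f_equal; lia).
  pose proof (Hx (b + 1)%Z m); pose proof (Hx (b + -1)%Z m). lra.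
Qed.

Lemma cut_image_mass_sum tau j0 J L0 : 0 <= tau ->
  (forall a k, zsum (zrange a k) (pmass r x) <= 1) ->
  (forall a k, zsum (zrange a k) (pmass r (schr lambda E V x)) <= tau) ->
  zsum (zrange j0 J)
    (fun j => zsum (zrange (j - 1) (L0 + 2 + 2)) (pmass r (schr lambda E V (cut x j (L0 + 2)))))
  <= INR L0 * tau + 4 * (pw 3 r * (tau + 2)).
Proof.
  intros Htau Hx HBx.
  eapply Rle_trans; [apply zsum_le; intros j _; apply zsum_pmass_schr_cut_le|].
  rewrite !zsum_plus.
  pose proof (zsum_edge_mass_le tau Hx HBx) as Hedge.
  pose proof (zsum_windows_le j0 J 2 (-1) _ _ Hedge).
  pose proof (zsum_windows_le j0 J L0 1 _ _ HBx).
  pose proof (zsum_windows_le j0 J 2 (1 + Z.of_nat L0) _ _ Hedge).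
  simpl INR in *. lra.
Qed.

(* Averaging over all translates [j, j + L) of the window: the edges of the cuts contribute
   O(1), their interiors L times the masses of x and of its image. *)
Lemma good_cut_exists tau er del N L0 : 0 <= tau -> 0 < er -> 0 < del <= 1 / 2 ->
  del * (tau + er) <= er / 2 -> 2 * (4 * (pw 3 r * (tau + 2))) < INR (L0 + 2) * er ->
  (forall a k, zsum (zrange a k) (pmass r x) <= 1) ->
  (forall a k, zsum (zrange a k) (pmass r (schr lambda E V x)) <= tau) ->
  1 - del < zsum (zrange (- Z.of_nat N) (2 * N + 1)) (pmass r x) ->
  exists j, 0 < zsum (zrange j (L0 + 2)) (pmass r (cut x j (L0 + 2))) /\
    zsum (zrange (j - 1) (L0 + 2 + 2)) (pmass r (schr lambda E V (cut x j (L0 + 2))))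
    <= (tau + er) * zsum (zrange j (L0 + 2)) (pmass r (cut x j (L0 + 2))).
Proof.
  intros Htau Her Hdel Hdel_er HL Hx HBx HN. set (L := (L0 + 2)%nat) in HL |- *.
  set (l := zrange (- Z.of_nat N - Z.of_nat L) (2 * N + 1 + L)).
  set (A := fun j => zsum (zrange (j - 1) (L + 2)) (pmass r (schr lambda E V (cut x j L)))).
  set (B := fun j => zsum (zrange j L) (pmass r (cut x j L))).
  assert (HB : INR L * (1 - del) <= zsum l B).
  { unfold l, B. rewrite (zsum_ext _ _ (fun j => zsum (zrange (j + 0) L) (pmass r x))).
    - eapply Rle_trans; [|apply zsum_windows_ge, pmass_ge_0].
      apply Rmult_le_compat_l; [apply pos_INR|lra].
    - intros j _. rewrite Z.add_0_r. apply zsum_pmass_cut. }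
  assert (HA : zsum l A <= INR L * tau + 4 * (pw 3 r * (tau + 2))).
  { eapply Rle_trans; [apply cut_image_mass_sum; [exact Htau|exact Hx|exact HBx]|].
    assert (INR L0 * tau <= INR L * tau)
      by (apply Rmult_le_compat_r; [lra|apply le_INR; lia]).
    lra. }
  destruct (zsum_pigeonhole l A B (tau + er)) as [j [_ Hj]]; try lra.
  - intros; apply zsum_ge_0; intros; apply pmass_ge_0.
  - intros; apply zsum_ge_0; intros; apply pmass_ge_0.
  - eapply Rlt_le_trans; [|apply HB]. apply Rmult_lt_0_compat; [|lra].
    apply lt_0_INR. lia.
  - eapply Rle_trans; [apply HA|]. eapply Rle_trans; [|apply Rmult_le_compat_l; [lra|apply HB]].
    assert (INR L * (del * (tau + er)) <= INR L * (er / 2))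
      by (apply Rmult_le_compat_l; [apply pos_INR|lra]).
    replace ((tau + er) * (INR L * (1 - del)))
      with (INR L * tau + INR L * er - INR L * (del * (tau + er))) by ring.
    lra.
  - exists j. exact Hj.
Qed.

End FiniteCutoff.

Lemma localize_fin lambda E r eps T : 1 <= r -> 0 < eps -> 0 <= T ->
  exists L : nat, forall V x t, lp_norm (Finite r) x = Finite 1 ->
    lp_norm (Finite r) (schr lambda E V x) = Finite t -> t <= T ->
    exists c t', attained_on (Finite r) lambda E V c L t' /\ t' <= t + eps.
Proof.
  intros Hr Heps HT.
  set (er := pw eps r). assert (Her : 0 < er) by (apply pw_gt_0; auto).
  set (tT := pw T r). assert (HtT : 0 <= tT) by apply pw_ge_0.
  set (C0 := 4 * (pw 3 r * (tT + 2))).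
  destruct (INR_unbounded (2 * C0 / er)) as [L0 HL0].
  exists (L0 + 2)%nat. intros V x t Hx HBx Ht.
  destruct (lp_norm_fin_spec r x 1) as [_ [Hx_win Hx_mass]]; [lra|auto|].
  rewrite pw_1_l in Hx_win, Hx_mass.
  destruct (lp_norm_fin_spec r _ t ltac:(lra) HBx) as [Ht0 [HBx_win _]].
  set (tau := pw t r).
  assert (Htau : 0 <= tau <= tT) by (split; [apply pw_ge_0|apply pw_le_l; lra]).
  set (del := er / (2 * (tT + er))).
  assert (Hdel : del * (tT + er) = er / 2) by (unfold del; field; lra).
  assert (Hdel0 : 0 < del) by (unfold del; apply Rdiv_lt_0_compat; lra).
  destruct (Hx_mass del Hdel0) as [N HN].
  destruct (good_cut_exists lambda E V r x ltac:(lra) tau er del N L0) as [j [HBj HAj]];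
    try assumption; try lra.
  - split; [lra|]. apply Rmult_le_reg_r with (tT + er); lra.
  - assert (del * (tau + er) <= del * (tT + er)) by (apply Rmult_le_compat_l; lra). lra.
  - assert (INR L0 < INR (L0 + 2)) by (apply lt_INR; lia).
    assert (pw 3 r * (tau + 2) <= pw 3 r * (tT + 2))
      by (apply Rmult_le_compat_l; [apply pw_ge_0|lra]).
    apply Rle_lt_trans with (2 * C0); [unfold C0; lra|].
    apply Rle_lt_trans with (2 * C0 / er * er); [right; field; lra|].
    apply Rmult_lt_compat_r; lra.
  - destruct (attained_on_normalize r lambda E V (cut x j (L0 + 2)) j (L0 + 2) (tau + er))
      as [t' [Ht' Ht'le]]; auto using supported_cut; try lra.
    exists j, t'. split; auto. eapply Rle_trans; [apply Ht'le|].
    rewrite <- (pw_pw_inv r (t + eps)) by lra.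
    apply pw_le_l; [left; apply Rinv_0_lt_compat; lra|].
    split; [lra|apply pw_superadditive; lra].
Qed.

Definition tent (n0 : Z) (w : R) (n : Z) : R := Rmax 0 (1 - Rabs (IZR (n - n0)) / w).

Lemma Rabs_Rmax_0_sub_le u v : Rabs (Rmax 0 u - Rmax 0 v) <= Rabs (u - v).
Proof.
  pose proof (Rle_abs (u - v)). pose proof (Rle_abs (- (u - v))). rewrite Rabs_Ropp in *.
  unfold Rmax. destruct (Rle_dec 0 u), (Rle_dec 0 v); apply Rabs_le; lra.
Qed.

Lemma tent_lipschitz n0 w n m : 0 < w -> (m = n + 1 \/ m = n - 1)%Z ->
  Rabs (tent n0 w m - tent n0 w n) <= / w.
Proof.
  intros Hw Hm. unfold tent. eapply Rle_trans; [apply Rabs_Rmax_0_sub_le|].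
  replace (1 - Rabs (IZR (m - n0)) / w - (1 - Rabs (IZR (n - n0)) / w))
    with ((Rabs (IZR (n - n0)) - Rabs (IZR (m - n0))) * / w) by (field; lra).
  rewrite Rabs_mult, (Rabs_pos_eq (/ w)) by (left; apply Rinv_0_lt_compat; auto).
  rewrite <- (Rmult_1_l (/ w)) at 2.
  apply Rmult_le_compat_r; [left; apply Rinv_0_lt_compat; auto|].
  eapply Rle_trans; [apply Rabs_triang_inv2|].
  rewrite <- minus_IZR. replace (n - n0 - (m - n0))%Z with (n - m)%Z by lia.
  destruct Hm as [-> | ->]; [replace (n - (n + 1))%Z with (-1)%Z by lia
                            |replace (n - (n - 1))%Z with 1%Z by lia];
    apply Rabs_le; lra.
Qed.

Lemma tent_bounds n0 w n : 0 < w -> 0 <= tent n0 w n <= 1.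
Proof.
  intros Hw. unfold tent. split; [apply Rmax_l|apply Rmax_lub; [lra|]].
  assert (0 <= Rabs (IZR (n - n0)) / w) by (apply Rdiv_le_0_compat; auto; apply Rabs_pos).
  lra.
Qed.

Lemma tent_center n0 w : tent n0 w n0 = 1.
Proof.
  unfold tent. rewrite Z.sub_diag, Rabs_R0. unfold Rdiv.
  rewrite Rmult_0_l, Rminus_0_r. apply Rmax_right; lra.
Qed.

Lemma tent_out n0 (w : nat) n : (0 < w)%nat ->
  ~ (n0 - Z.of_nat w <= n < n0 - Z.of_nat w + Z.of_nat (2 * w))%Z -> tent n0 (INR w) n = 0.
Proof.
  intros Hw Hn. unfold tent. apply Rmax_left.
  assert (INR w <= Rabs (IZR (n - n0))).
  { rewrite INR_IZR_INZ. destruct (Z_lt_le_dec n n0).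
    - rewrite Rabs_left, <- opp_IZR by (apply IZR_lt; lia). apply IZR_le. lia.
    - rewrite Rabs_pos_eq by (apply IZR_le; lia). apply IZR_le. lia. }
  assert (0 < INR w) by (apply lt_0_INR; auto).
  assert (1 <= Rabs (IZR (n - n0)) / INR w).
  { apply Rmult_le_reg_r with (INR w); auto. unfold Rdiv.
    rewrite Rmult_assoc, Rinv_l; lra. }
  lra.
Qed.

Lemma Cmod_schr_cutoff_inf_le lambda E V x (phi : Z -> R) h t n :
  (forall m, 0 <= phi m <= 1) ->
  (forall m, Rabs (phi (m + 1)%Z - phi m) <= h /\ Rabs (phi (m - 1)%Z - phi m) <= h) ->
  (forall m, Cmod (x m) <= 1) -> (forall m, Cmod (schr lambda E V x m) <= t) ->
  Cmod (schr lambda E V (fun m => Cmult (RtoC (phi m)) (x m)) n) <= t + 2 * h.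
Proof.
  intros Hphi Hlip Hx HBx. eapply Rle_trans; [apply Cmod_schr_cutoff_le|].
  destruct (Hphi n) as [H0 H1]. destruct (Hlip n) as [Hl1 Hl2].
  pose proof (HBx n). pose proof (Cmod_ge_0 (schr lambda E V x n)).
  pose proof (Hx (n + 1)%Z); pose proof (Hx (n - 1)%Z).
  pose proof (Cmod_ge_0 (x (n + 1)%Z)); pose proof (Cmod_ge_0 (x (n - 1)%Z)).
  pose proof (Rabs_pos (phi (n + 1)%Z - phi n)); pose proof (Rabs_pos (phi (n - 1)%Z - phi n)).
  rewrite Rabs_pos_eq by lra.
  assert (phi n * Cmod (schr lambda E V x n) <= t) by nra.
  assert (Rabs (phi (n + 1)%Z - phi n) * Cmod (x (n + 1)%Z) <= h) by nra.
  assert (Rabs (phi (n - 1)%Z - phi n) * Cmod (x (n - 1)%Z) <= h) by nra.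
  lra.
Qed.

Lemma attained_on_normalize_inf lambda E V y a k s s' : 0 < s -> supported y a k ->
  lp_norm p_infty y = Finite s -> lp_norm p_infty (schr lambda E V y) = Finite s' ->
  attained_on p_infty lambda E V a k (/ s * s').
Proof.
  intros Hs Hy Hys Hys'. exists (fun n => Cmult (RtoC (/ s)) (y n)). split; [|split].
  - intros n Hn. rewrite Hy by auto. apply Cmult_0_r.
  - rewrite (lp_norm_scal_inf y (/ s) s) by (auto using Rinv_0_lt_compat).
    f_equal. field. lra.
  - rewrite (lp_norm_ext _ _ (fun n => Cmult (RtoC (/ s)) (schr lambda E V y n)))
      by (intros; apply schr_scal).
    apply lp_norm_scal_inf; auto using Rinv_0_lt_compat.
Qed.

Lemma tent_cut_attained lambda E V x t (w : nat) n0 del : (0 < w)%nat -> del < 1 ->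
  (forall n, Cmod (x n) <= 1) -> (forall n, Cmod (schr lambda E V x n) <= t) ->
  1 - del < Cmod (x n0) -> exists s s', 1 - del < s /\ s' <= t + 2 * / INR w /\
    attained_on p_infty lambda E V (n0 - Z.of_nat w) (2 * w) (/ s * s').
Proof.
  intros Hw Hdel Hx HBx Hn0. assert (HwR : 0 < INR w) by (apply lt_0_INR; auto).
  set (phi := tent n0 (INR w)). set (y := fun n => Cmult (RtoC (phi n)) (x n)).
  assert (Hphi : forall m, 0 <= phi m <= 1) by (intros; apply tent_bounds; auto).
  assert (Hsy : supported y (n0 - Z.of_nat w) (2 * w)).
  { intros n Hn. unfold y, phi. rewrite tent_out by auto. apply Cmult_0_l. }
  destruct (lp_norm_inf_bounded y 1) as [s [Hs _]].
  { intros n. unfold y. rewrite Cmod_mult, Cmod_R, Rabs_pos_eq by apply Hphi.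
    pose proof (Hphi n); pose proof (Hx n); pose proof (Cmod_ge_0 (x n)). nra. }
  assert (Hs_gt : 1 - del < s).
  { destruct (lp_norm_inf_spec y s Hs) as [Hy _]. specialize (Hy n0). unfold y, phi in Hy.
    rewrite Cmod_mult, Cmod_R, tent_center, Rabs_R1, Rmult_1_l in Hy. lra. }
  destruct (lp_norm_inf_bounded (schr lambda E V y) (t + 2 * / INR w)) as [s' [Hs' Hs'le]].
  { intros n. apply Cmod_schr_cutoff_inf_le; auto.
    intros m. split; apply tent_lipschitz; auto. }
  exists s, s'. split; [|split]; auto.
  apply (attained_on_normalize_inf lambda E V y); auto. lra.
Qed.

(* A tent of half-width w perturbs the image by at most 2 / w, while the norm stays almost 1
   if the tent is centred at an almost maximal entry. *)
Lemma localize_inf lambda E eps T : 0 < eps -> 0 <= T ->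
  exists L : nat, forall V x t, lp_norm p_infty x = Finite 1 ->
    lp_norm p_infty (schr lambda E V x) = Finite t -> t <= T ->
    exists c t', attained_on p_infty lambda E V c L t' /\ t' <= t + eps.
Proof.
  intros Heps HT. destruct (INR_unbounded (4 / eps)) as [w0 Hw0].
  set (w := S w0). exists (2 * w)%nat.
  assert (Hw : 0 < INR w) by (apply lt_0_INR; unfold w; lia).
  assert (H2w : 2 * / INR w <= eps / 2).
  { assert (INR w0 <= INR w) by (apply le_INR; unfold w; lia).
    apply Rmult_le_reg_r with (INR w); auto. rewrite Rmult_assoc, Rinv_l by lra.
    apply Rmult_le_reg_r with (2 / eps); [apply Rdiv_lt_0_compat; lra|].
    replace (eps / 2 * INR w * (2 / eps)) with (INR w) by (field; lra).
    replace (2 * 1 * (2 / eps)) with (4 / eps) by (field; lra). lra. }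
  intros V x t Hx HBx Ht.
  destruct (lp_norm_inf_spec x 1 Hx) as [Hx1 Hx_max].
  destruct (lp_norm_inf_spec _ t HBx) as [HBx1 _].
  set (del := eps / (2 * (T + eps))).
  assert (Hdel : del * (T + eps) = eps / 2) by (unfold del; field; lra).
  assert (Hdel0 : 0 < del) by (unfold del; apply Rdiv_lt_0_compat; lra).
  assert (Hdel1 : del <= 1 / 2) by (apply Rmult_le_reg_r with (T + eps); lra).
  destruct (Hx_max del Hdel0) as [n0 Hn0].
  destruct (tent_cut_attained lambda E V x t w n0 del) as [s [s' [Hs [Hs' Hatt]]]];
    auto; try lra. unfold w; lia.
  exists (n0 - Z.of_nat w)%Z, (/ s * s'). split; auto.
  apply Rmult_le_reg_l with s; [lra|]. rewrite <- Rmult_assoc, Rinv_r, Rmult_1_l by lra.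
  pose proof (lp_norm_ge_0 _ _ _ HBx).
  assert (del * (t + eps) <= del * (T + eps)) by (apply Rmult_le_compat_l; lra).
  nra.
Qed.

Lemma localize p lambda E eps T : Rbar_le (Finite 1) p -> 0 < eps -> 0 <= T ->
  exists L : nat, forall V x t, lp_norm p x = Finite 1 ->
    lp_norm p (schr lambda E V x) = Finite t -> t <= T ->
    exists c t', attained_on p lambda E V c L t' /\ t' <= t + eps.
Proof.
  intros Hp He HT. destruct p as [r| |]; simpl in Hp; try contradiction.
  - apply localize_fin; auto.
  - apply localize_inf; auto.
Qed.

(** * Continued fractions *)

Lemma frac_part_bounds r : 0 <= frac_part r < 1.
Proof. pose proof (base_fp r). lra. Qed.

Lemma frac_part_add_IZR w z : 0 <= w < 1 -> frac_part (w + IZR z) = w.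
Proof.
  intros H. symmetry. apply (proj2 (Int_part_frac_part_spec (w + IZR z) z w H ltac:(ring))).
Qed.

Lemma mobius_step alpha p p' q q' t a : 0 < t -> 0 < q + q' * t ->
  alpha = (p + p' * t) / (q + q' * t) ->
  alpha = ((a * p + p') + p * (/ t - a)) / ((a * q + q') + q * (/ t - a)).
Proof.
  intros Ht Hd ->.
  replace ((a * q + q') + q * (/ t - a)) with ((q + q' * t) / t) by (field; lra).
  field. split; lra.
Qed.

Lemma Rinv_lt_swap eps x : 0 < eps -> / eps < x -> / x < eps.
Proof.
  intros He Hx. pose proof (Rinv_0_lt_compat eps He).
  rewrite <- (Rinv_inv eps). apply Rinv_lt_contravar; [apply Rmult_lt_0_compat|]; lra.
Qed.


Section ContinuedFraction.
Variable alpha : R.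

Definition gauss_iter (n : nat) : R := Nat.iter n gauss alpha.
Definition cf_digitZ (n : nat) : Z := Int_part (/ gauss_iter n).

Fixpoint cf_pqZ (n : nat) : (Z * Z) * (Z * Z) :=
  match n with
  | O => ((1, 0), (0, 1))%Z
  | S m => let '((p', q'), (p, q)) := cf_pqZ m in
           ((p, q), (cf_digitZ m * p + p', cf_digitZ m * q + q'))%Z
  end.

Definition cf_p (n : nat) : Z := fst (snd (cf_pqZ n)).
Definition cf_q (n : nat) : Z := snd (snd (cf_pqZ n)).
Definition cf_p_prev (n : nat) : Z := fst (fst (cf_pqZ n)).
Definition cf_q_prev (n : nat) : Z := snd (fst (cf_pqZ n)).

Lemma cf_pqZ_S n :
  cf_p (S n) = (cf_digitZ n * cf_p n + cf_p_prev n)%Z /\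
  cf_q (S n) = (cf_digitZ n * cf_q n + cf_q_prev n)%Z /\
  cf_p_prev (S n) = cf_p n /\ cf_q_prev (S n) = cf_q n.
Proof.
  unfold cf_p, cf_q, cf_p_prev, cf_q_prev. simpl.
  destruct (cf_pqZ n) as [[p' q'] [p q]]. simpl. auto.
Qed.

Lemma cf_pq_IZR n : cf_pq alpha n =
  ((IZR (cf_p_prev n), IZR (cf_q_prev n)), (IZR (cf_p n), IZR (cf_q n))).
Proof.
  induction n; [reflexivity|].
  simpl. rewrite IHn. destruct (cf_pqZ_S n) as (-> & -> & -> & ->).
  rewrite !plus_IZR, !mult_IZR. reflexivity.
Qed.

Lemma cf_approx_IZR n : cf_approx alpha n = IZR (cf_p n) / IZR (cf_q n).
Proof. unfold cf_approx. rewrite cf_pq_IZR. reflexivity. Qed.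

Definition cf_invariant (n : nat) : Prop :=
  0 < gauss_iter n < 1 /\ (Z.max 1 (Z.of_nat n) <= cf_q n)%Z /\ (0 <= cf_q_prev n)%Z /\
  ((1 <= n)%nat -> (1 <= cf_q_prev n)%Z) /\
  (cf_p n * cf_q_prev n - cf_p_prev n * cf_q n = 1 \/
   cf_p n * cf_q_prev n - cf_p_prev n * cf_q n = -1)%Z /\
  alpha = (IZR (cf_p n) + IZR (cf_p_prev n) * gauss_iter n)
          / (IZR (cf_q n) + IZR (cf_q_prev n) * gauss_iter n).

Hypothesis alpha_irr : irrational alpha.
Hypothesis alpha_01 : 0 <= alpha <= 1.

Lemma cf_invariant_0 : cf_invariant 0.
Proof.
  unfold cf_invariant, gauss_iter, cf_p, cf_q, cf_p_prev, cf_q_prev; simpl.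
  split; [|repeat split; try lia; field].
  split; apply Rnot_le_lt; intros H; apply alpha_irr.
  - exists 0%Z, 1%Z. split; [lia|]. rewrite (Rle_antisym alpha 0); [field|lra..].
  - exists 1%Z, 1%Z. split; [lia|]. rewrite (Rle_antisym alpha 1); [field|lra..].
Qed.

Lemma cf_invariant_S n : cf_invariant n -> cf_invariant (S n).
Proof.
  intros (Ht & Hq & Hq' & Hq1 & Hdet & Hid).
  destruct (cf_pqZ_S n) as (E1 & E2 & E3 & E4).
  set (t := gauss_iter n) in *. set (a := cf_digitZ n).
  assert (Hinv : 1 < / t) by (rewrite <- Rinv_1; apply Rinv_lt_contravar; lra).
  destruct (base_Int_part (/ t)) as [B1 B2]. change (Int_part (/ t)) with a in B1, B2.
  assert (Ha1 : (1 <= a)%Z) by (assert (Ha0 : 0 < IZR a) by lra; apply lt_IZR in Ha0; lia).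
  assert (Ht' : gauss_iter (S n) = / t - IZR a) by reflexivity.
  assert (HqR : 1 <= IZR (cf_q n)) by (apply IZR_le; lia).
  assert (Hq'R : 0 <= IZR (cf_q_prev n)) by (apply IZR_le; lia).
  assert (HaR : 1 <= IZR a) by (apply IZR_le; lia).
  assert (Hid' := mobius_step alpha (IZR (cf_p n)) (IZR (cf_p_prev n)) (IZR (cf_q n))
                    (IZR (cf_q_prev n)) t (IZR a) ltac:(lra) ltac:(nra) Hid).
  assert (Hnz : gauss_iter (S n) <> 0).
  { intros H0. rewrite Ht' in H0. apply alpha_irr.
    exists (cf_p (S n)), (cf_q (S n)). split; [rewrite E2; nia|].
    rewrite Hid', E1, E2, !plus_IZR, !mult_IZR. fold a.
    replace (/ t - IZR a) with 0 by lra. field. nra. }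
  pose proof (frac_part_bounds (/ t)).
  unfold cf_invariant. rewrite E1, E2, E3, E4, Ht'. repeat split.
  - destruct (Req_dec (/ t - IZR a) 0); [rewrite <- Ht' in *; tauto|].
    change (frac_part (/ t)) with (/ t - IZR a) in *. lra.
  - change (frac_part (/ t)) with (/ t - IZR a) in *. lra.
  - destruct n; [simpl in *|specialize (Hq1 ltac:(lia))]; nia.
  - lia.
  - intros _. lia.
  - destruct Hdet; [right|left]; lia.
  - rewrite Hid', !plus_IZR, !mult_IZR. reflexivity.
Qed.

Lemma cf_invariant_all n : cf_invariant n.
Proof. induction n; [apply cf_invariant_0|apply cf_invariant_S; auto]. Qed.

Lemma cf_q_ge n : 1 <= IZR (cf_q n) /\ INR n <= IZR (cf_q n).
Proof.
  destruct (cf_invariant_all n) as (_ & Hq & _). rewrite INR_IZR_INZ.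
  split; apply IZR_le; lia.
Qed.

Lemma cf_det n : exists sg : Z, (sg = 1 \/ sg = -1)%Z /\
  (cf_p n * cf_q_prev n - cf_p_prev n * cf_q n = sg)%Z.
Proof. destruct (cf_invariant_all n) as (_ & _ & _ & _ & Hd & _). destruct Hd; eauto. Qed.

(* With t = gauss_iter n, the identity alpha = (p + p' t) / (q + q' t) and p q' - p' q = +-1
   give |q alpha - p| = t / (q + q' t) = 1 / (q / t + q'), and q / t + q' > q_{n+1}. *)
Lemma cf_error_bound n :
  0 < Rabs (IZR (cf_q n) * alpha - IZR (cf_p n)) < / IZR (cf_q (S n)).
Proof.
  destruct (cf_invariant_all n) as (Ht & Hq & Hq' & _ & Hdet & Hid).
  destruct (cf_invariant_all (S n)) as (HtS & _).
  destruct (cf_pqZ_S n) as (_ & E2 & _ & _).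
  set (t := gauss_iter n) in *. set (a := cf_digitZ n) in *.
  assert (HtS' : gauss_iter (S n) = / t - IZR a) by reflexivity.
  assert (HqR : 1 <= IZR (cf_q n)) by (apply IZR_le; lia).
  assert (Hq'R : 0 <= IZR (cf_q_prev n)) by (apply IZR_le; lia).
  assert (HD : 0 < IZR (cf_q n) + IZR (cf_q_prev n) * t) by nra.
  assert (Habs : Rabs (IZR (cf_q n) * alpha - IZR (cf_p n))
                 = t / (IZR (cf_q n) + IZR (cf_q_prev n) * t)).
  { rewrite Hid.
    replace (IZR (cf_q n) * _ - IZR (cf_p n))
      with (- IZR (cf_p n * cf_q_prev n - cf_p_prev n * cf_q n) * t
            / (IZR (cf_q n) + IZR (cf_q_prev n) * t))
      by (rewrite minus_IZR, !mult_IZR; field; lra).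
    unfold Rdiv. rewrite !Rabs_mult, Rabs_Ropp, (Rabs_pos_eq t) by lra.
    rewrite (Rabs_pos_eq (/ _)) by (apply Rlt_le, Rinv_0_lt_compat; lra).
    destruct Hdet as [-> | ->]; rewrite ?Rabs_R1, ?Rabs_m1; ring. }
  rewrite Habs. split; [apply Rdiv_lt_0_compat; lra|].
  rewrite E2, plus_IZR, mult_IZR. fold a.
  rewrite HtS' in HtS.
  assert (Hinv : 1 < / t) by (rewrite <- Rinv_1; apply Rinv_lt_contravar; lra).
  assert (Ha : 0 < IZR a * IZR (cf_q n) + IZR (cf_q_prev n)).
  { assert (0 < IZR a) by lra. nra. }
  assert (Hat : IZR a * t < 1).
  { apply Rmult_lt_reg_r with (/ t); [apply Rinv_0_lt_compat; lra|].
    rewrite Rmult_assoc, Rinv_r, Rmult_1_l, Rmult_1_r by lra. lra. }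
  apply Rmult_lt_reg_r with
    ((IZR (cf_q n) + IZR (cf_q_prev n) * t) * (IZR a * IZR (cf_q n) + IZR (cf_q_prev n))).
  - apply Rmult_lt_0_compat; auto.
  - field_simplify; try lra. nra.
Qed.

Lemma cf_approx_error m :
  Rabs (alpha - cf_approx alpha m) * IZR (cf_q m) < / INR (S m).
Proof.
  rewrite cf_approx_IZR. destruct (cf_q_ge m) as [Hq _]. destruct (cf_q_ge (S m)) as [_ HqS].
  destruct (cf_error_bound m) as [_ He].
  replace (Rabs (alpha - IZR (cf_p m) / IZR (cf_q m)) * IZR (cf_q m))
    with (Rabs (IZR (cf_q m) * alpha - IZR (cf_p m))).
  - eapply Rlt_le_trans; [apply He|]. apply Rinv_le_contravar; auto.
    rewrite S_INR. pose proof (pos_INR m). lra.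
  - rewrite <- (Rabs_pos_eq (IZR (cf_q m))) at 3 by lra.
    rewrite <- Rabs_mult. f_equal. field. lra.
Qed.

Lemma cf_approx_fast eps : 0 < eps -> exists M, forall m, (M <= m)%nat ->
  / IZR (cf_q m) < eps /\ Rabs (alpha - cf_approx alpha m) * IZR (cf_q m) < eps.
Proof.
  intros He. destruct (INR_unbounded (/ eps)) as [N HN].
  exists N. intros m Hm.
  destruct (cf_q_ge m) as [Hq Hqm].
  assert (HmN : INR N <= INR m) by (apply le_INR; auto).
  pose proof (cf_approx_error m).
  assert (/ INR (S m) < eps) by (apply Rinv_lt_swap; [|rewrite S_INR]; lra).
  split; [apply Rinv_lt_swap; lra | lra].
Qed.

Lemma cf_small_multiple eps : 0 < eps -> exists q p : Z, 0 < Rabs (IZR q * alpha - IZR p) < eps.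
Proof.
  intros He. destruct (INR_unbounded (/ eps)) as [N HN].
  exists (cf_q N), (cf_p N).
  destruct (cf_error_bound N) as [H0 H1]. split; auto.
  destruct (cf_q_ge (S N)) as [_ HqS]. rewrite S_INR in HqS.
  eapply Rlt_trans; [apply H1|]. apply Rinv_lt_swap; lra.
Qed.

(* p_m q_{m-1} - p_{m-1} q_m = +-1 lets k alpha_m reach every point s / q_m mod 1. *)
Lemma cf_approx_hits_grid m (s : Z) :
  exists k p : Z, IZR k * cf_approx alpha m = IZR p + IZR s / IZR (cf_q m).
Proof.
  destruct (cf_det m) as [sg [Hsg Hdet]].
  destruct (cf_q_ge m) as [Hq _].
  exists (sg * s * cf_q_prev m)%Z, (sg * s * cf_p_prev m)%Z.
  rewrite cf_approx_IZR, !mult_IZR.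
  apply (f_equal IZR) in Hdet. rewrite minus_IZR, !mult_IZR in Hdet.
  assert (Hsg2 : IZR sg * IZR sg = 1) by (destruct Hsg as [-> | ->]; lra).
  set (P := IZR (cf_p m)) in *. set (Q := IZR (cf_q m)) in *.
  assert (E : IZR sg * IZR s * IZR (cf_q_prev m) * (P / Q)
              - (IZR sg * IZR s * IZR (cf_p_prev m) + IZR s / Q)
              = IZR s * (IZR sg * (P * IZR (cf_q_prev m) - IZR (cf_p_prev m) * Q) - 1) / Q)
    by (field; lra).
  rewrite Hdet, Hsg2, Rminus_diag, Rmult_0_r in E. unfold Rdiv in E. rewrite Rmult_0_l in E.
  lra.
Qed.

End ContinuedFraction.

(** * Windows of Sturmian potentials *)

Lemma sturm_pot_1 b th n : 1 - b <= frac_part (IZR n * b + th) -> sturm_pot b th n = 1.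
Proof.
  intros H. pose proof (frac_part_bounds (IZR n * b + th)). unfold sturm_pot.
  destruct (Rle_dec (1 - b) _); [|lra]. destruct (Rlt_dec _ 1); lra.
Qed.

Lemma sturm_pot_0 b th n : frac_part (IZR n * b + th) < 1 - b -> sturm_pot b th n = 0.
Proof. intros H. unfold sturm_pot. destruct (Rle_dec (1 - b) _); lra. Qed.

Lemma sturm_pot_match b th n b' th' n' w z :
  let y := frac_part (IZR n * b + th) in
  IZR n' * b' + th' = y + w + IZR z -> 0 <= y + w < 1 ->
  (1 - b <= y -> 1 - b' <= y + w) -> (y < 1 - b -> y + w < 1 - b') ->
  sturm_pot b' th' n' = sturm_pot b th n.
Proof.
  intros y Hn' Hw H1 H0.
  assert (Hf : frac_part (IZR n' * b' + th') = y + w) by (rewrite Hn'; apply frac_part_add_IZR, Hw).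
  destruct (Rle_lt_dec (1 - b) y) as [Hy|Hy].
  - rewrite !sturm_pot_1; rewrite ?Hf; auto.
  - rewrite !sturm_pot_0; rewrite ?Hf; auto.
Qed.

Lemma frac_hits_interval eta lo hi C : eta <> 0 -> 0 <= lo -> hi <= 1 -> Rabs eta < hi - lo ->
  exists s : Z, lo < frac_part (C + IZR s * eta) < hi.
Proof.
  intros He Hlo Hhi Hab.
  assert (Hstep : forall e, 0 < e -> e < hi - lo -> exists s : Z, lo < C + IZR s * e <= lo + e).
  { intros e He0 He1. set (u := (lo - C) / e). exists (Int_part u + 1)%Z.
    destruct (base_Int_part u) as [B1 B2]. rewrite plus_IZR.
    assert (u * e = lo - C) by (unfold u; field; lra).
    assert (IZR (Int_part u) * e <= u * e) by (apply Rmult_le_compat_r; lra).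
    assert ((u - 1) * e < IZR (Int_part u) * e) by (apply Rmult_lt_compat_r; lra).
    split; nra. }
  destruct (Rlt_or_le 0 eta) as [Hp|Hn].
  - rewrite Rabs_pos_eq in Hab by lra. destruct (Hstep eta Hp Hab) as [s Hs]. exists s.
    rewrite <- (Rplus_0_r (C + _)), frac_part_add_IZR with (z := 0%Z); lra.
  - rewrite Rabs_left1 in Hab by lra. destruct (Hstep (- eta)) as [s Hs]; try lra.
    exists (- s)%Z. rewrite opp_IZR.
    replace (C + - IZR s * eta) with (C + IZR s * - eta) by ring.
    rewrite <- (Rplus_0_r (C + _)), frac_part_add_IZR with (z := 0%Z); lra.
Qed.

(* The points n P / Q mod 1 lie on the grid (1 / Q) Z. *)
Lemma frac_rational_gap (P Q n : Z) : (1 <= Q)%Z ->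
  let y := frac_part (IZR n * (IZR P / IZR Q) + 0) in
  y <= 1 - / IZR Q /\ (y < 1 - IZR P / IZR Q -> y <= 1 - IZR P / IZR Q - / IZR Q).
Proof.
  intros HQ y. assert (HQR : 1 <= IZR Q) by (apply IZR_le; lia).
  set (G := (n * P - Int_part (IZR n * (IZR P / IZR Q) + 0) * Q)%Z).
  assert (Hgrid : y * IZR Q = IZR G).
  { unfold y, G, frac_part. rewrite minus_IZR, !mult_IZR. field. lra. }
  assert (Hle : forall h, IZR G < IZR h -> y <= (IZR h - 1) / IZR Q).
  { intros h Hlt. apply lt_IZR in Hlt. apply Rmult_le_reg_r with (IZR Q); [lra|].
    replace ((IZR h - 1) / IZR Q * IZR Q) with (IZR (h - 1)) by (rewrite minus_IZR; field; lra).
    rewrite Hgrid. apply IZR_le. lia. }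
  pose proof (frac_part_bounds (IZR n * (IZR P / IZR Q) + 0)) as Hy01. fold y in Hy01.
  split.
  - replace (1 - / IZR Q) with ((IZR Q - 1) / IZR Q) by (field; lra).
    apply Hle. rewrite <- Hgrid. nra.
  - intros Hy. replace (1 - IZR P / IZR Q - / IZR Q) with ((IZR (Q - P) - 1) / IZR Q)
      by (rewrite minus_IZR; field; lra).
    apply Hle. rewrite <- Hgrid, minus_IZR.
    apply Rmult_lt_compat_r with (r := IZR Q) in Hy; [|lra].
    replace ((1 - IZR P / IZR Q) * IZR Q) with (IZR Q - IZR P) in Hy by (field; lra). lra.
Qed.

Lemma sturm_margin alpha theta (c : Z) (K : nat) : exists del, 0 < del <= 1 /\
  forall i : nat, (i < K)%nat ->
  let y := frac_part (IZR (c + Z.of_nat i) * alpha + theta) in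
  (1 - alpha <= y -> y + del <= 1) /\ (y < 1 - alpha -> y + del <= 1 - alpha).
Proof.
  induction K as [|K [del [Hd HK]]].
  - exists 1. split; [lra|]. intros; lia.
  - set (y := frac_part (IZR (c + Z.of_nat K) * alpha + theta)).
    pose proof (frac_part_bounds (IZR (c + Z.of_nat K) * alpha + theta)) as Hy. fold y in Hy.
    set (g := if Rle_dec (1 - alpha) y then 1 - y else 1 - alpha - y).
    assert (Hg : 0 < g) by (unfold g; destruct (Rle_dec (1 - alpha) y); lra).
    exists (Rmin del g). pose proof (Rmin_l del g) as Hl. pose proof (Rmin_r del g) as Hr.
    split; [split; [apply Rmin_glb_lt|]; lra|].
    intros i Hi. destruct (Nat.eq_dec i K) as [->|Hne].
    + fold y. unfold g in *. destruct (Rle_dec (1 - alpha) y); split; intros; lra.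
    + destruct (HK i ltac:(lia)) as [H1 H2].
      split; intros Hyi; [apply H1 in Hyi|apply H2 in Hyi]; lra.
Qed.

Definition window_match (V : Z -> R) (c : Z) (W : Z -> R) (k : Z) (L : nat) : Prop :=
  forall i : nat, (i < L)%nat -> W (k + Z.of_nat i)%Z = V (c + Z.of_nat i)%Z.

Section SturmWindows.
Variables alpha theta : R.
Hypothesis alpha_irr : irrational alpha.
Hypothesis alpha_01 : 0 <= alpha <= 1.

(* Modulo 1, (s q + i) alpha + theta = (c + i) alpha_m + e + i (alpha - alpha_m): a shift
   smaller than the step 1 / q_m of the grid containing (c + i) alpha_m mod 1. *)
Lemma approximant_window_at m c K q p s :
  let am := cf_approx alpha m in
  let d := alpha - am in
  let e := frac_part (theta - IZR c * am + IZR s * (IZR q * alpha - IZR p)) in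
  INR K * Rabs d < e < / IZR (cf_q alpha m) - INR K * Rabs d ->
  window_match (sturm_pot am 0) c (sturm_pot alpha theta) (s * q) K.
Proof.
  intros am d e He i Hi.
  destruct (cf_q_ge alpha alpha_irr alpha_01 m) as [HQ _].
  assert (Hi' : 0 <= INR i /\ INR i + 1 <= INR K)
    by (split; [apply pos_INR|rewrite <- S_INR; apply le_INR; lia]).
  assert (Hd : - Rabs d <= d <= Rabs d) by (apply Rabs_le_between; lra).
  destruct (frac_rational_gap (cf_p alpha m) (cf_q alpha m) (c + Z.of_nat i)) as [Hg1 Hg2];
    [apply le_IZR; lra|].
  rewrite <- cf_approx_IZR in Hg1, Hg2. fold am in Hg1, Hg2.
  set (y := frac_part (IZR (c + Z.of_nat i) * am + 0)) in *.
  pose proof (frac_part_bounds (IZR (c + Z.of_nat i) * am + 0)) as Hy01. fold y in Hy01.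
  assert (Hw : Rabs d < e + INR i * d < / IZR (cf_q alpha m) - Rabs d) by nra.
  apply (sturm_pot_match am 0 (c + Z.of_nat i) alpha theta (s * q + Z.of_nat i)
           (e + INR i * d) (Int_part (IZR (c + Z.of_nat i) * am + 0)
           + Int_part (theta - IZR c * am + IZR s * (IZR q * alpha - IZR p)) + s * p)).
  - fold y. unfold y, e, frac_part, d. rewrite INR_IZR_INZ, !plus_IZR, !mult_IZR. ring.
  - fold y. lra.
  - fold y. intros. unfold d in *. lra.
  - fold y. intros Hy. specialize (Hg2 Hy). unfold d in *. lra.
Qed.

Lemma approximant_windows_in_sturm K : exists M, forall m, (M <= m)%nat -> forall c : Z,
  exists k, window_match (sturm_pot (cf_approx alpha m) 0) c (sturm_pot alpha theta) k K.
Proof.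
  pose proof (pos_INR K) as HK.
  destruct (cf_approx_fast alpha alpha_irr alpha_01 (/ (2 * INR K + 1))) as [M HM];
    [apply Rinv_0_lt_compat; lra|].
  exists M. intros m Hm c. destruct (HM m Hm) as [_ Herr].
  destruct (cf_q_ge alpha alpha_irr alpha_01 m) as [HQ _].
  set (Q := IZR (cf_q alpha m)) in *. set (ad := Rabs (alpha - cf_approx alpha m)) in *.
  assert (Had : 0 <= ad) by apply Rabs_pos.
  assert (HKd : 2 * INR K * ad < / Q).
  { apply Rmult_lt_reg_r with Q; [lra|]. rewrite Rinv_l by lra.
    apply Rmult_lt_compat_l with (r := 2 * INR K + 1) in Herr; [|lra].
    rewrite Rinv_r in Herr by lra. nra. }
  destruct (cf_small_multiple alpha alpha_irr alpha_01 (/ Q - 2 * INR K * ad))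
    as [q [p [Heta0 Heta]]]; [lra|].
  destruct (frac_hits_interval (IZR q * alpha - IZR p) (INR K * ad) (/ Q - INR K * ad)
              (theta - IZR c * cf_approx alpha m)) as [s Hs].
  - intros E0. rewrite E0, Rabs_R0 in Heta0. lra.
  - nra.
  - assert (/ Q <= 1) by (rewrite <- Rinv_1; apply Rinv_le_contravar; lra). nra.
  - lra.
  - exists (s * q)%Z. apply (approximant_window_at m c K q p s). exact Hs.
Qed.

(* Modulo 1, (k + i) alpha_m = (c + i) alpha + theta + e - i (alpha - alpha_m): a shift
   smaller than the margin del of the points (c + i) alpha + theta mod 1. *)
Lemma sturm_window_at m c K k p s del :
  let am := cf_approx alpha m in
  let d := alpha - am in
  let e := frac_part (- (IZR c * alpha + theta) + IZR s / IZR (cf_q alpha m)) in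
  IZR k * am = IZR p + IZR s / IZR (cf_q alpha m) ->
  (forall i : nat, (i < K)%nat ->
     let y := frac_part (IZR (c + Z.of_nat i) * alpha + theta) in
     (1 - alpha <= y -> y + del <= 1) /\ (y < 1 - alpha -> y + del <= 1 - alpha)) ->
  Rabs d <= del / 2 -> INR K * Rabs d < e < del / 2 - INR K * Rabs d ->
  window_match (sturm_pot alpha theta) c (sturm_pot am 0) k K.
Proof.
  intros am d e Hk Hmargin Hdel He i Hi.
  assert (Hi' : 0 <= INR i /\ INR i + 1 <= INR K)
    by (split; [apply pos_INR|rewrite <- S_INR; apply le_INR; lia]).
  assert (Hd : - Rabs d <= d <= Rabs d) by (apply Rabs_le_between; lra).
  destruct (Hmargin i Hi) as [Hm1 Hm0].
  set (y := frac_part (IZR (c + Z.of_nat i) * alpha + theta)) in *.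
  pose proof (frac_part_bounds (IZR (c + Z.of_nat i) * alpha + theta)) as Hy01. fold y in Hy01.
  assert (Hw : Rabs d < e - INR i * d < del / 2) by nra.
  apply (sturm_pot_match alpha theta (c + Z.of_nat i) am 0 (k + Z.of_nat i)
           (e - INR i * d) (p + Int_part (- (IZR c * alpha + theta) + IZR s / IZR (cf_q alpha m))
           + Int_part (IZR (c + Z.of_nat i) * alpha + theta))).
  - fold y. rewrite plus_IZR, Rmult_plus_distr_r, Hk.
    unfold y, e, frac_part, d. rewrite INR_IZR_INZ, !plus_IZR. ring.
  - fold y. destruct (Rle_lt_dec (1 - alpha) y) as [Hy|Hy];
      [specialize (Hm1 Hy)|specialize (Hm0 Hy)]; lra.
  - fold y. intros Hy. unfold d in *. lra.
  - fold y. intros Hy. specialize (Hm0 Hy). unfold d in *. lra.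
Qed.

Lemma sturm_windows_in_approximant K c : exists M, forall m, (M <= m)%nat ->
  exists k, window_match (sturm_pot alpha theta) c (sturm_pot (cf_approx alpha m) 0) k K.
Proof.
  destruct (sturm_margin alpha theta c K) as [del [Hdel Hmargin]].
  pose proof (pos_INR K) as HK.
  destruct (cf_approx_fast alpha alpha_irr alpha_01 (del / (4 * INR K + 4))) as [M HM];
    [apply Rdiv_lt_0_compat; lra|].
  exists M. intros m Hm. destruct (HM m Hm) as [HQ Herr].
  destruct (cf_q_ge alpha alpha_irr alpha_01 m) as [HQ1 _].
  set (Q := IZR (cf_q alpha m)) in *. set (ad := Rabs (alpha - cf_approx alpha m)) in *.
  assert (Had : 0 <= ad) by apply Rabs_pos.
  assert (Hadq : ad <= ad * Q) by nra.
  assert (Hsmall : / Q + 2 * INR K * ad < del / 2).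
  { apply Rlt_le_trans with ((2 * INR K + 1) * (del / (4 * INR K + 4))); [nra|].
    apply Rmult_le_reg_r with (4 * INR K + 4); [lra|]. field_simplify; lra. }
  destruct (frac_hits_interval (/ Q) (INR K * ad) (del / 2 - INR K * ad)
              (- (IZR c * alpha + theta))) as [s Hs].
  - assert (0 < / Q) by (apply Rinv_0_lt_compat; lra). lra.
  - nra.
  - nra.
  - rewrite Rabs_pos_eq by (apply Rlt_le, Rinv_0_lt_compat; lra). lra.
  - destruct (cf_approx_hits_grid alpha alpha_irr alpha_01 m s) as [k [p Hk]].
    exists k. apply (sturm_window_at m c K k p s del Hk Hmargin).
    + assert (del / (4 * INR K + 4) <= del / 2)
        by (apply Rmult_le_compat_l; [lra|apply Rinv_le_contravar; lra]).
      fold ad. lra.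
    + exact Hs.
Qed.

End SturmWindows.

(** * Lower norms *)

Definition attained (p : Rbar) (lambda E : R) (V : Z -> R) (t : R) : Prop :=
  exists x : Z -> C, lp_norm p x = Finite 1 /\ lp_norm p (schr lambda E V x) = Finite t.

Lemma attained_nonempty p lambda E V : Rbar_le (Finite 1) p -> exists t, attained p lambda E V t.
Proof.
  intros Hp. set (delta := fun n : Z => if Z.eq_dec n 0 then RtoC 1 else RtoC 0).
  assert (Hs : supported delta 0 1).
  { intros n Hn. unfold delta. destruct (Z.eq_dec n 0); auto. lia. }
  destruct (lp_norm_supported_finite p _ _ _ Hp (supported_schr lambda E V _ _ _ Hs)) as [t Ht].
  exists t, delta. split; auto.
  destruct p as [r| |]; simpl in Hp; try contradiction.
  - rewrite (lp_norm_fin_supp r delta 0 1) by (auto; lra). cbn [zrange].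
    rewrite zsum_cons, zsum_nil. unfold pmass, delta. simpl.
    rewrite Cmod_R, Rabs_R1, pw_1_l, Rplus_0_r, pw_1_l. reflexivity.
  - apply lp_norm_inf_intro.
    + intros n. unfold delta. destruct (Z.eq_dec n 0); rewrite Cmod_R;
        [rewrite Rabs_R1|rewrite Rabs_R0]; lra.
    + intros d Hd. exists 0%Z. unfold delta. simpl. rewrite Cmod_R, Rabs_R1. lra.
Qed.

Lemma lower_norm_spec p lambda E V : Rbar_le (Finite 1) p ->
  exists nu, lower_norm p (schr lambda E V) = Finite nu /\ 0 <= nu /\
    (forall t, attained p lambda E V t -> nu <= t) /\
    (forall e, 0 < e -> exists t, attained p lambda E V t /\ t < nu + e).
Proof.
  intros Hp. unfold lower_norm. fold (attained p lambda E V).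
  destruct (Glb_Rbar_correct (attained p lambda E V)) as [Hlb Hglb].
  destruct (attained_nonempty p lambda E V Hp) as [t0 Ht0].
  assert (H0 : Rbar_le 0 (Glb_Rbar (attained p lambda E V))).
  { apply Hglb. intros t [x [_ Hx]]. eapply lp_norm_ge_0; eauto. }
  pose proof (Hlb t0 Ht0) as Hle0.
  destruct (Glb_Rbar (attained p lambda E V)) as [nu| |]; simpl in H0, Hle0; try contradiction.
  exists nu. split; [reflexivity|split; [exact H0|split; [exact Hlb|]]].
  intros e He. apply NNPP. intros Hn.
  enough (Rbar_le (nu + e) nu) by (simpl in *; lra).
  apply Hglb. intros t Ht. simpl. apply Rnot_lt_le. intros Hlt. apply Hn. eauto.
Qed.

Lemma attained_on_transfer p lambda E V W c L k t : Rbar_le (Finite 1) p ->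
  attained_on p lambda E V c L t -> window_match V c W k L -> attained p lambda E W t.
Proof.
  intros Hp [y [Hs [Hy HBy]]] Hwin.
  exists (fun n => y (n + (c - k))%Z). split.
  - rewrite (lp_norm_shift p y c L); auto.
  - rewrite (lp_norm_ext _ _ (fun n => schr lambda E V y (n + (c - k))%Z)).
    + rewrite (lp_norm_shift p _ (c - 1) (L + 2)); auto using supported_schr.
    + intros n. apply schr_shift. intros m.
      destruct (classic (c <= m + (c - k) < c + Z.of_nat L)%Z) as [Hm|Hm]; [right|left; auto].
      pose proof (Hwin (Z.to_nat (m - k)) ltac:(lia)) as Hwm.
      rewrite Z2Nat.id in Hwm by lia. replace (k + (m - k))%Z with m in Hwm by lia.
      rewrite Hwm. f_equal. lia.
Qed.

Section WindowApproximation.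
Variables (p : Rbar) (lambda E : R) (V : Z -> R) (Ws : nat -> Z -> R).
Hypothesis Hp : Rbar_le (Finite 1) p.

Let nu (W : Z -> R) : R := real (lower_norm p (schr lambda E W)).

Lemma lower_norm_approx_le :
  (forall L c, exists M, forall m, (M <= m)%nat -> exists k, window_match V c (Ws m) k L) ->
  forall eps, 0 < eps -> exists M, forall m, (M <= m)%nat -> nu (Ws m) <= nu V + eps.
Proof.
  intros Hwin eps He.
  destruct (lower_norm_spec p lambda E V Hp) as [nuV [HV [_ [_ HVap]]]].
  destruct (HVap (eps / 2)) as [t [[x [Hx HBx]] Ht]]; [lra|].
  destruct (localize p lambda E (eps / 2) t Hp) as [L HL]; [lra|eapply lp_norm_ge_0; eauto|].
  destruct (HL V x t Hx HBx (Rle_refl t)) as [c [t' [Hc Ht']]].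
  destruct (Hwin L c) as [M HM]. exists M. intros m Hm.
  destruct (HM m Hm) as [k Hk].
  destruct (lower_norm_spec p lambda E (Ws m) Hp) as [nuW [HW [_ [HWlb _]]]].
  unfold nu. rewrite HV, HW. simpl.
  pose proof (HWlb t' (attained_on_transfer p lambda E V (Ws m) c L k t' Hp Hc Hk)). lra.
Qed.

Lemma lower_norm_le_approx :
  (forall L, exists M, forall m, (M <= m)%nat -> forall c, exists k, window_match (Ws m) c V k L) ->
  forall eps, 0 < eps -> exists M, forall m, (M <= m)%nat -> nu V <= nu (Ws m) + eps.
Proof.
  intros Hwin eps He.
  destruct (lower_norm_spec p lambda E V Hp) as [nuV [HV [HnuV [HVlb _]]]].
  destruct (localize p lambda E (eps / 2) nuV Hp) as [L HL]; [lra|auto|].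
  destruct (Hwin L) as [M HM]. exists M. intros m Hm.
  destruct (lower_norm_spec p lambda E (Ws m) Hp) as [nuW [HW [_ [_ HWap]]]].
  unfold nu. rewrite HV, HW. simpl. apply Rnot_lt_le. intros Hlt.
  destruct (HWap (eps / 2)) as [s [[z [Hz HBz]] Hs]]; [lra|].
  destruct (HL (Ws m) z s Hz HBz) as [c [s' [Hc Hs']]]; [lra|].
  destruct (HM m Hm c) as [k Hk].
  pose proof (HVlb s' (attained_on_transfer p lambda E (Ws m) V c L k s' Hp Hc Hk)). lra.
Qed.

End WindowApproximation.

Theorem lemma5p10 (p : Rbar) (alpha theta lambda E : R) :
  Rbar_le (Finite 1) p ->
  0 <= alpha <= 1 -> irrational alpha ->
  0 <= theta < 1 ->
  is_lim_seq
    (fun m => real (lower_norm p (H_minus_E lambda (cf_approx alpha m) 0 E)))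
    (lower_norm p (H_minus_E lambda alpha theta E)).
Proof.
  intros Hp Ha Hirr _. rewrite !H_minus_E_schr.
  set (V := sturm_pot alpha theta). set (Ws := fun m => sturm_pot (cf_approx alpha m) 0).
  destruct (lower_norm_spec p lambda E V Hp) as [nu [Hnu _]].
  rewrite Hnu. apply is_lim_seq_spec. intros [eps He].
  destruct (lower_norm_approx_le p lambda E V Ws Hp) with (eps := eps / 2) as [M1 H1];
    [intros L c; apply sturm_windows_in_approximant; auto | lra |].
  destruct (lower_norm_le_approx p lambda E V Ws Hp) with (eps := eps / 2) as [M2 H2];
    [intros L; apply approximant_windows_in_sturm; auto | lra |].
  exists (Nat.max M1 M2). intros m Hm.
  specialize (H1 m ltac:(lia)). specialize (H2 m ltac:(lia)).
  rewrite Hnu in H1, H2. unfold Ws in *. simpl in *.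
  rewrite H_minus_E_schr. apply Rabs_lt_between'. lra.
Qed.
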